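(* For each $i\in\{1,\dots,m\}$ let $A_i:\mathbb{R}^n\rightrightarrows\mathbb{R}^n$ be a maximally monotone symmetric linear relation. Then the infimal convolution $f=q_{A_1}\,\square\cdots\square\,q_{A_m}$ is a generalized linear-quadratic function and $$\partial f=\Big(\sum_{i=1}^mA_i^{-1}\Big)^{-1},$$ the parallel sum of the $A_i$.
   Context: A linear relation is an operator $\mathbb{R}^n\rightrightarrows\mathbb{R}^n$ whose graph is a linear subspace; monotone: $\langle x^*-y^*,x-y\rangle\ge0$ on the graph; maximally monotone: no monotone operator with strictly larger graph; symmetric: $\langle x,y^*\rangle=\langle y,x^*\rangle$ for all $(x,x^* ),(y,y^* )$ in the graph. Inverses are set-valued; sums are pointwise Minkowski sums. For a monotone linear relation $B$, $q_B(x)=\frac12\langle x,Bx\rangle$ on $\operatorname{dom}B$ and $\infty$ elsewhere. Infimal convolution: $(g\,\square\,h)(x)=\inf_y\{g(y)+h(x-y)\}$. $\partial$ denotes the Fenchel subdifferential. A generalized linear-quadratic function is one of the form $x\mapsto\frac12\langle x-a,B(x-a)\rangle+\langle b,x\rangle+c$ with $B$ a linear relation. *)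

From HB Require Import structures.
From mathcomp Require Import all_boot all_order all_algebra.
From mathcomp Require Import boolp classical_sets reals ereal.
Set Implicit Arguments. Unset Strict Implicit. Unset Printing Implicit Defensive.
Import Order.TTheory GRing.Theory Num.Theory.
Local Open Scope classical_set_scope.
Local Open Scope ring_scope.

Section Defs.
Variables (R : realType) (n : nat).
Notation V := 'rV[R]_n.

Definition dotv (x y : V) : R := \sum_(i < n) x ord0 i * y ord0 i.

(* set-valued operators R^n =>> R^n; A x xs means xs \in A x, i.e. (x,xs) in gra A *)
Definition oper := V -> set V.

Definition linear_relation (A : oper) : Prop :=
  A 0 0 /\ forall (a : R) x y xs ys, A x xs -> A y ys -> A (a *: x + y) (a *: xs + ys).

Definition monotone (A : oper) : Prop :=
  forall x y xs ys, A x xs -> A y ys -> 0 <= dotv (xs - ys) (x - y).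

Definition maximally_monotone (A : oper) : Prop :=
  monotone A /\
  forall B : oper, monotone B -> (forall x xs, A x xs -> B x xs) ->
    forall x xs, B x xs -> A x xs.

Definition symmetric_op (A : oper) : Prop :=
  forall x y xs ys, A x xs -> A y ys -> dotv x ys = dotv y xs.

Definition inv_op (A : oper) : oper := fun y x => A x y.

Definition add_op (A B : oper) : oper :=
  fun x z => exists a b, A x a /\ B x b /\ z = a + b.

Definition zero_op : oper := fun _ z => z = 0.

Definition sum_op (m : nat) (A : 'I_m -> oper) : oper :=
  \big[add_op/zero_op]_(i < m) A i.

(* q_B x = 1/2 <x, Bx> on dom B, +oo elsewhere (for monotone linear relations
   <x, x*> does not depend on the choice of x* in B x) *)
Definition qform (B : oper) (x : V) : \bar R :=
  if pselect (exists xs, B x xs)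
  then ((1/2) * dotv x (xget 0 (B x)))%:E
  else +oo%E.

Definition infconv (g h : V -> \bar R) : V -> \bar R :=
  fun x => ereal_inf [set (g y + h (x - y)%R)%E | y in [set: V]].

Definition ind0 : V -> \bar R := fun x => if x == 0 then 0%E else +oo%E.

Definition infconv_fam (m : nat) (g : 'I_m -> V -> \bar R) : V -> \bar R :=
  \big[infconv/ind0]_(i < m) g i.

Definition subdiff (f : V -> \bar R) : oper :=
  fun x xs => f x \is a fin_num /\
    forall y, (f x + (dotv xs (y - x))%:E <= f y)%E.

Definition gen_lin_quad (f : V -> \bar R) : Prop :=
  exists (B : oper) (a b : V) (c : R),
    linear_relation B /\ monotone B /\
    forall x, f x = (qform B (x - a)%R + (dotv b x + c)%:E)%E.

End Defs.

(* Write A □ B := (A^-1 + B^-1)^-1 for the parallel sum.  For a maximally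
   monotone symmetric linear relation C, every y ∈ C x is a subgradient of q_C
   at x (monotonicity plus symmetry), and conversely maximality turns every
   subgradient into an element of C x; hence ∂q_C = C.
   Such relations are closed under parallel sum.  Linearity, monotonicity and
   symmetry are immediate; maximality follows from Minty's criterion, because
   the subspace {a + b + y | y ∈ A a ∩ B b} has trivial orthogonal, using
   ran C = (C^-1 0)^⊥ for maximally monotone linear C.
   For two relations q_A □ q_B = q_(A □ B): if y ∈ A a ∩ B b then the split
   x = a + b attains the infimum by the two subgradient inequalities, and
   dom A + dom B ⊆ dom (A □ B).  By induction f = q_C for C the parallel sum of
   all the A_i, so f is linear-quadratic (a = b = 0, c = 0) and ∂f = C. *)

From HB Require Import structures.
From mathcomp Require Import all_boot all_order all_algebra.
From mathcomp Require Import boolp classical_sets reals ereal.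
From mathcomp Require Import ring lra zify.
Set Implicit Arguments. Unset Strict Implicit. Unset Printing Implicit Defensive.
Import Order.TTheory GRing.Theory Num.Theory.
Local Open Scope ring_scope.

Section InnerProduct.
Variables (R : realType) (n : nat).
Implicit Types (x y z : 'rV[R]_n).

Lemma dotvC x y : dotv x y = dotv y x.
Proof. by apply: eq_bigr => i _; rewrite mulrC. Qed.

Lemma dotvDl x y z : dotv (x + y) z = dotv x z + dotv y z.
Proof. by rewrite /dotv -big_split; apply: eq_bigr => i _; rewrite mxE mulrDl. Qed.

Lemma dotvZl (a : R) x z : dotv (a *: x) z = a * dotv x z.
Proof. by rewrite /dotv mulr_sumr; apply: eq_bigr => i _; rewrite mxE mulrA. Qed.

Lemma dotvNl x z : dotv (- x) z = - dotv x z.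
Proof. by rewrite -scaleN1r dotvZl mulN1r. Qed.

Lemma dotvBl x y z : dotv (x - y) z = dotv x z - dotv y z.
Proof. by rewrite dotvDl dotvNl. Qed.

Lemma dotv0l z : dotv 0 z = 0.
Proof. by rewrite -(scale0r 0) dotvZl mul0r. Qed.

Lemma dotvDr x y z : dotv z (x + y) = dotv z x + dotv z y.
Proof. by rewrite dotvC dotvDl !(dotvC z). Qed.

Lemma dotvZr (a : R) x z : dotv z (a *: x) = a * dotv z x.
Proof. by rewrite dotvC dotvZl dotvC. Qed.

Lemma dotvNr x z : dotv z (- x) = - dotv z x.
Proof. by rewrite dotvC dotvNl dotvC. Qed.

Lemma dotvBr x y z : dotv z (x - y) = dotv z x - dotv z y.
Proof. by rewrite dotvDr dotvNr. Qed.

Lemma dotv0r z : dotv z 0 = 0.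
Proof. by rewrite dotvC dotv0l. Qed.

Lemma dotvv_ge0 x : 0 <= dotv x x.
Proof. by apply: sumr_ge0 => i _; rewrite -expr2 sqr_ge0. Qed.

Lemma dotvv_eq0 x : dotv x x = 0 -> x = 0.
Proof.
move=> /eqP; rewrite psumr_eq0 => [/allP x0|i _]; last by rewrite -expr2 sqr_ge0.
apply/rowP => i; rewrite mxE.
by apply/eqP; have := x0 i (mem_index_enum _); rewrite /= mulf_eq0 orbb.
Qed.

Lemma dotv_mulmx x y : dotv x y = (x *m y^T) ord0 ord0.
Proof. by rewrite mxE; apply: eq_bigr => i _; rewrite mxE. Qed.

Definition subspace (W : set 'rV[R]_n) :=
  W 0 /\ forall (a : R) x y, W x -> W y -> W (a *: x + y).

Lemma subspace_row_space (W : set 'rV[R]_n) :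
  subspace W -> exists M : 'M[R]_n, forall v, (v <= M)%MS <-> W v.
Proof.
case=> W0 WC.
have WD x y : W x -> W y -> W (x + y) by move=> *; rewrite -[x]scale1r; apply: WC.
have WZ (a : R) x : W x -> W (a *: x) by move=> *; rewrite -[_ *: _]addr0; apply: WC.
pose inW (M : 'M[R]_n) := forall v : 'rV_n, (v <= M)%MS -> W v.
suff: forall d (M : 'M[R]_n), inW M -> (n - \rank M <= d)%N ->
    exists M', inW M' /\ forall w, W w -> (w <= M')%MS.
  case/(_ n 0) => [v|| M' [MW WM]]; last by exists M' => v; split; [apply: MW|apply: WM].
    by rewrite submx0 => /eqP ->.
  by rewrite leq_subr.
elim=> [|d IH] M MW rkM.
  exists M; split => // w _; apply: submx_full.
  by rewrite /row_full eqn_leq rank_leq_col /= -subn_eq0 -leqn0.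
have [WM|/existsNP [w /not_implyP [Ww wM]]] := pselect (forall w, W w -> (w <= M)%MS).
  by exists M.
have MwW : inW (M + w)%MS.
  move=> v /sub_addsmxP [[u1 u2] /= ->]; apply: WD; first by apply/MW/submxMl.
  have /sub_rVP [a ->] : (u2 *m w <= w)%MS by apply: submxMl.
  exact: WZ.
apply: (IH _ MwW).
have rk_lt : (\rank M < \rank (M + w)%MS)%N.
  rewrite (ltn_leqif (mxrank_leqif_sup (addsmxSl M w))).
  by apply/negP; rewrite addsmx_sub => /andP [_ /wM].
have := rank_leq_col (M + w)%MS; lia.
Qed.

(* [W^⊥⊥ ⊆ W]: writing W as the row space of M, W^⊥ is the row space of
   K := kermx M^T and W^⊥⊥ that of kermx K^T, which contains M and has the
   same rank. *)
Lemma subspace_biorth (W : set 'rV[R]_n) u : subspace W ->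
  (forall v, (forall w, W w -> dotv v w = 0) -> dotv v u = 0) -> W u.
Proof.
move=> /subspace_row_space [M WM] uWoo; apply/WM.
pose K := kermx M^T.
have Ku v : (v <= K)%MS -> dotv v u = 0.
  move=> /sub_kermxP vK; apply: uWoo => w /WM /submxP [D ->].
  by rewrite dotv_mulmx trmx_mul mulmxA vK mul0mx mxE.
have uKo : (u <= kermx K^T)%MS.
  apply/sub_kermxP/rowP => i; rewrite !mxE.
  rewrite -[RHS](Ku (row i K)) ?row_sub // dotvC /dotv.
  by apply: eq_bigr => j _; rewrite !mxE.
have MKo : (M <= kermx K^T)%MS.
  by apply/sub_kermxP; rewrite -[M]trmxK -trmx_mul mulmx_ker trmx0.
have rkKo : \rank (kermx K^T) = \rank M.
  rewrite mxrank_ker mxrank_tr mxrank_ker mxrank_tr.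
  have := rank_leq_col M; lia.
have [_] := mxrank_leqif_sup MKo; rewrite rkKo eqxx => /esym KoM.
exact: submx_trans uKo KoM.
Qed.

End InnerProduct.

Lemma bounded_linear_eq0 (R : realFieldType) (a b : R) :
  (forall t, t * b <= a) -> b = 0.
Proof.
move=> tb_le; apply/eqP; apply: contraT => b0.
by have := tb_le ((a + 1) / b); rewrite divfK // -subr_le0 addrAC subrr add0r ler10.
Qed.

Section LinearRelations.
Variables (R : realType) (n : nat).
Implicit Types (C : oper R n) (x y z u v xs ys zs : 'rV[R]_n).

Lemma linear_relationD C x y xs ys : linear_relation C ->
  C x xs -> C y ys -> C (x + y) (xs + ys).
Proof. by case=> _ CC Cx Cy; have := CC 1 _ _ _ _ Cx Cy; rewrite !scale1r. Qed.

Lemma linear_relationZ C (a : R) x xs : linear_relation C ->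
  C x xs -> C (a *: x) (a *: xs).
Proof. by case=> C0 CC Cx; have := CC a _ _ _ _ Cx C0; rewrite !addr0. Qed.

Lemma linear_relationB C x y xs ys : linear_relation C ->
  C x xs -> C y ys -> C (x - y) (xs - ys).
Proof.
move=> Clin Cx Cy; rewrite -!scaleN1r.
by apply: linear_relationD => //; apply: linear_relationZ.
Qed.

Lemma linear_relation_inv C : linear_relation C -> linear_relation (inv_op C).
Proof. by case=> C0 CC; split => // a x y xs ys Cx Cy; apply: CC. Qed.

Lemma monotone_linear_ge0 C x xs : linear_relation C -> monotone C ->
  C x xs -> 0 <= dotv xs x.
Proof. by case=> C0 _ Cmono Cx; have := Cmono _ _ _ _ Cx C0; rewrite !subr0. Qed.

Lemma monotone_inv C : monotone C -> monotone (inv_op C).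
Proof. by move=> Cmono x y xs ys Cx Cy; rewrite dotvC; apply: Cmono. Qed.

Lemma maximally_monotone_inv C :
  maximally_monotone C -> maximally_monotone (inv_op C).
Proof.
case=> Cmono Cmax; split=> [|B Bmono CB x xs]; first exact: monotone_inv.
by apply: (Cmax (inv_op B)) => [|a b]; [exact: monotone_inv | apply: CB].
Qed.

Lemma maximally_monotone_mem C x xs : maximally_monotone C ->
  (forall z zs, C z zs -> 0 <= dotv (xs - zs) (x - z)) -> C x xs.
Proof.
move=> [Cmono Cmax] xs_rel.
pose B : oper R n := fun a b => C a b \/ (a = x /\ b = xs).
apply: (Cmax B) => [a b c d [Cab|[-> ->]] [Ccd|[-> ->]]||]; try by [left|right].
- exact: Cmono.
- by rewrite -(opprB xs) -(opprB x) dotvNl dotvNr opprK; apply: xs_rel.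
- exact: xs_rel.
- by rewrite !subrr dotv0l.
Qed.

Lemma monotone_surj_maximal C : monotone C ->
  (forall u, exists x xs, C x xs /\ x + xs = u) -> maximally_monotone C.
Proof.
move=> Cmono Csurj; split => // B Bmono CB x xs Bx.
have [z [zs [Cz zE]]] := Csurj (x + xs).
have := Bmono _ _ _ _ Bx (CB _ _ Cz).
have -> : xs - zs = - (x - z).
  by apply/eqP; rewrite -addr_eq0 addrC addrACA -opprD zE subrr.
rewrite dotvNl oppr_ge0 => le0.
have /dotvv_eq0/eqP : dotv (x - z) (x - z) = 0.
  by apply/eqP; rewrite eq_le le0 dotvv_ge0.
rewrite subr_eq0 => /eqP xz; move: zE; rewrite -xz => /addrI xsE.
by rewrite xz -xsE.
Qed.

Lemma maximally_monotone_range C v : linear_relation C -> maximally_monotone C ->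
  (forall z, C z 0 -> dotv v z = 0) -> exists x, C x v.
Proof.
move=> Clin Cmax kerv.
have ranC : subspace (fun y => exists x, C x y).
  split; first by exists 0; case: Clin.
  by move=> a x y [x1 C1] [y1 C2]; exists (a *: x1 + y1); case: Clin => _; apply.
apply: (subspace_biorth ranC) => z zran.
suff /kerv : C z 0 by rewrite dotvC.
apply: maximally_monotone_mem => // x xs Cx.
rewrite sub0r dotvNl dotvBr (dotvC xs z) (zran xs (ex_intro _ x Cx)) sub0r opprK.
exact: monotone_linear_ge0 Clin Cmax.1 Cx.
Qed.

Lemma maximally_monotone_dom C v : linear_relation C -> maximally_monotone C ->
  (forall zs, C 0 zs -> dotv v zs = 0) -> exists xs, C v xs.
Proof.
move=> Clin Cmax; apply: (maximally_monotone_range (C := inv_op C)).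
  exact: linear_relation_inv.
exact: maximally_monotone_inv.
Qed.

Lemma monotone_symmetric_isotropic C z y : linear_relation C -> monotone C ->
  symmetric_op C -> C z y -> dotv z y = 0 -> forall x xs, C x xs -> dotv x y = 0.
Proof.
move=> Clin Cmono Csym Cz zy0 x xs Cx.
suff /bounded_linear_eq0/eqP : forall t, t * (2 * dotv x y) <= dotv xs x.
  by rewrite mulf_eq0 pnatr_eq0 => /eqP.
move=> t; have := Cmono _ _ _ _ Cx (linear_relationZ t Clin Cz).
rewrite !dotvBl !dotvBr !dotvZl !dotvZr (dotvC y z) zy0.
rewrite (dotvC xs z) -(Csym _ _ _ _ Cx Cz) (dotvC y x); lra.
Qed.

End LinearRelations.

Section QuadraticForms.
Variables (R : realType) (n : nat).
Implicit Types (A B C : oper R n) (x y z xs : 'rV[R]_n).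

Record sym_maxmono C : Prop := SymMaxMono {
  sym_maxmono_linear : linear_relation C;
  sym_maxmono_maximal : maximally_monotone C;
  sym_maxmono_symmetric : symmetric_op C }.

(* The value of [qform] does not depend on the element picked by [xget]:
   by symmetry C 0 is orthogonal to dom C. *)
Lemma qformE C x y : linear_relation C -> symmetric_op C -> C x y ->
  qform C x = (1/2 * dotv x y)%:E.
Proof.
move=> Clin Csym Cxy; rewrite /qform; case: pselect => [domx|[]]; last by exists y.
have /(Csym _ _ _ _ Cxy) : C 0 (xget 0 (C x) - y).
  by rewrite -(subrr x); apply: linear_relationB => //; exact: xgetPex.
by rewrite dotv0l dotvBr => /eqP; rewrite subr_eq0 => /eqP ->.
Qed.

Lemma qform_notdom C x : ~ (exists xs, C x xs) -> qform C x = +oo%E.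
Proof. by rewrite /qform; case: pselect. Qed.

Lemma qform_neqNy C x : qform C x != -oo%E.
Proof. by rewrite /qform; case: pselect. Qed.

Lemma qform_subgrad C x y z : linear_relation C -> monotone C -> symmetric_op C ->
  C x y -> (qform C x + (dotv y (z - x))%:E <= qform C z)%E.
Proof.
move=> Clin Cmono Csym Cxy; rewrite (qformE Clin Csym Cxy).
have [[zs Cz]|notdom] := pselect (exists zs, C z zs); last first.
  by rewrite qform_notdom // leey.
rewrite (qformE Clin Csym Cz) -EFinD lee_fin.
have := Cmono _ _ _ _ Cz Cxy; have := Csym _ _ _ _ Cxy Cz.
rewrite !dotvBl !dotvBr (dotvC zs z) (dotvC zs x) (dotvC y z) (dotvC y x); lra.
Qed.

Lemma subdiff_qform C : sym_maxmono C -> subdiff (qform C) = C.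
Proof.
move=> [Clin Cmax Csym]; have Cmono := Cmax.1.
apply/funext => x; apply/funext => y; apply/propext; split; last first.
  by move=> Cxy; split; [rewrite (qformE Clin Csym Cxy) | move=> z; apply: qform_subgrad].
case=> qx_fin y_subgrad.
have [xs Cx] : exists xs, C x xs.
  by apply: contrapT => /qform_notdom qx; rewrite qx in qx_fin.
apply: maximally_monotone_mem => // z zs Cz.
have := y_subgrad z; rewrite (qformE Clin Csym Cx) (qformE Clin Csym Cz).
have := qform_subgrad x Clin Cmono Csym Cz.
rewrite (qformE Clin Csym Cx) (qformE Clin Csym Cz) -!EFinD !lee_fin.
rewrite -(opprB x z) dotvNr dotvBl; lra.
Qed.

End QuadraticForms.

Section ParallelSum.
Variables (R : realType) (n : nat).
Implicit Types (A B C : oper R n) (x y z u v : 'rV[R]_n).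

Definition parallel_sum A B : oper R n := inv_op (add_op (inv_op A) (inv_op B)).

Lemma parallel_sum_linear A B : linear_relation A -> linear_relation B ->
  linear_relation (parallel_sum A B).
Proof.
move=> [A0 AC] [B0 BC]; split; first by exists 0, 0; rewrite addr0.
move=> c x y xs ys [a1 [b1 [Aa1 [Bb1 ->]]]] [a2 [b2 [Aa2 [Bb2 ->]]]].
exists (c *: a1 + a2), (c *: b1 + b2); do !split; [exact: AC | exact: BC |].
by rewrite scalerDr addrACA.
Qed.

Lemma parallel_sum_monotone A B : monotone A -> monotone B ->
  monotone (parallel_sum A B).
Proof.
move=> Amono Bmono x y xs ys [a1 [b1 [Aa1 [Bb1 ->]]]] [a2 [b2 [Aa2 [Bb2 ->]]]].
by rewrite opprD addrACA dotvDr; apply: addr_ge0; [apply: Amono | apply: Bmono].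
Qed.

Lemma parallel_sum_symmetric A B : symmetric_op A -> symmetric_op B ->
  symmetric_op (parallel_sum A B).
Proof.
move=> Asym Bsym x y xs ys [a1 [b1 [Aa1 [Bb1 ->]]]] [a2 [b2 [Aa2 [Bb2 ->]]]].
by rewrite !dotvDl (Asym _ _ _ _ Aa1 Aa2) (Bsym _ _ _ _ Bb1 Bb2).
Qed.

Lemma parallel_sum_maximal A B : sym_maxmono A -> sym_maxmono B ->
  maximally_monotone (parallel_sum A B).
Proof.
move=> [Alin Amax Asym] [Blin Bmax Bsym].
have [[A0 AC] [B0 BC]] := (Alin, Blin).
apply: monotone_surj_maximal => [|u]; first exact: parallel_sum_monotone Amax.1 Bmax.1.
pose W u := exists a b y, A a y /\ B b y /\ u = a + b + y.
have Wsub : subspace W.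
  split; first by exists 0, 0, 0; rewrite !addr0.
  move=> c _ _ [a1 [b1 [y1 [Aa1 [Bb1 ->]]]]] [a2 [b2 [y2 [Aa2 [Bb2 ->]]]]].
  exists (c *: a1 + a2), (c *: b1 + b2), (c *: y1 + y2); do !split; [exact: AC|exact: BC|].
  by rewrite !scalerDr addrACA (addrACA (c *: a1)).
suff [a [b [y [Aa [Bb ->]]]]] : W u by exists (a + b), y; split => //; exists a, b.
apply: (subspace_biorth Wsub) => v vW; suff -> : v = 0 by rewrite dotv0l.
have [a Aa] : exists a, A a v.
  apply: maximally_monotone_range => // z Az; apply: vW.
  by exists z, 0, 0; rewrite !addr0.
have [b Bb] : exists b, B b v.
  apply: maximally_monotone_range => // z Bz; apply: vW.
  by exists 0, z, 0; rewrite !addr0 add0r.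
have := vW (a + b + v) (ex_intro _ a (ex_intro _ b (ex_intro _ v (conj Aa (conj Bb erefl))))).
have := monotone_linear_ge0 Alin Amax.1 Aa; have := monotone_linear_ge0 Blin Bmax.1 Bb.
have := dotvv_ge0 v; rewrite !dotvDr !(dotvC v) => *; apply: dotvv_eq0; lra.
Qed.

Lemma parallel_sum_sym_maxmono A B : sym_maxmono A -> sym_maxmono B ->
  sym_maxmono (parallel_sum A B).
Proof.
move=> Ammsl Bmmsl; have [Alin Amax Asym] := Ammsl; have [Blin Bmax Bsym] := Bmmsl.
split; [exact: parallel_sum_linear | exact: parallel_sum_maximal |].
exact: parallel_sum_symmetric.
Qed.

(* dom (A □ B) is the orthogonal of (A □ B) 0; a vector w with A a w, B (-a) w
   is isotropic for both A and B, hence orthogonal to dom A and to dom B. *)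
Lemma parallel_sum_dom A B x1 x2 y1 y2 : sym_maxmono A -> sym_maxmono B ->
  A x1 y1 -> B x2 y2 -> exists y, parallel_sum A B (x1 + x2) y.
Proof.
move=> Ammsl Bmmsl Ax1 Bx2; have [Alin Amax Asym] := Ammsl; have [Blin Bmax Bsym] := Bmmsl.
apply: maximally_monotone_dom => [||w [a [b [Aa [Bb ab0]]]]].
- exact: parallel_sum_linear.
- exact: parallel_sum_maximal.
have bE : b = - a by apply/eqP; rewrite -addr_eq0 addrC -ab0.
have := monotone_linear_ge0 Alin Amax.1 Aa; have := monotone_linear_ge0 Blin Bmax.1 Bb.
rewrite bE dotvNr => ge0b ge0a.
have aw0 : dotv a w = 0 by rewrite dotvC; lra.
have bw0 : dotv b w = 0 by rewrite bE dotvNl aw0 oppr0.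
rewrite dotvDl (monotone_symmetric_isotropic Alin Amax.1 Asym Aa aw0 Ax1).
by rewrite (monotone_symmetric_isotropic Blin Bmax.1 Bsym Bb bw0 Bx2) addr0.
Qed.

Lemma infconv_qform A B : sym_maxmono A -> sym_maxmono B ->
  infconv (qform A) (qform B) = qform (parallel_sum A B).
Proof.
move=> Ammsl Bmmsl; have [Alin Amax Asym] := Ammsl; have [Blin Bmax Bsym] := Bmmsl.
have [ABlin _ ABsym] := parallel_sum_sym_maxmono Ammsl Bmmsl.
apply/funext => x; rewrite /infconv.
have [[y ABxy]|notdom] := pselect (exists y, parallel_sum A B x y); last first.
  rewrite qform_notdom //; apply/le_anti; rewrite leey /=.
  apply: le_ereal_inf_tmp => _ [z _ <-].
  have [[zs Az]|?] := pselect (exists zs, A z zs); last first.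
    by rewrite qform_notdom ?addye ?qform_neqNy.
  have [[zs' Bz]|?] := pselect (exists zs, B (x - z) zs); last first.
    by rewrite (qform_notdom (C := B)) ?addey ?qform_neqNy.
  by case: notdom; rewrite -(subrK z x) addrC; exact: parallel_sum_dom Az Bz.
rewrite (qformE ABlin ABsym ABxy); case: ABxy => [a [b [Aa [Bb xE]]]].
apply/le_anti/andP; split.
  apply: ereal_inf_lbound; exists a => //.
  rewrite xE (addrC a b) addrK (qformE Alin Asym Aa) (qformE Blin Bsym Bb) -EFinD.
  by congr EFin; rewrite dotvDl; ring.
apply: le_ereal_inf_tmp => _ [z _ <-].
apply: le_trans (leeD (qform_subgrad z Alin Amax.1 Asym Aa)
                      (qform_subgrad (x - z) Blin Bmax.1 Bsym Bb)).
rewrite (qformE Alin Asym Aa) (qformE Blin Bsym Bb) -!EFinD lee_fin xE.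
rewrite !dotvBr !dotvDr !dotvDl (dotvC y a) (dotvC y b) (dotvC y z); lra.
Qed.

End ParallelSum.

Section ParallelSumFamily.
Variables (R : realType) (n : nat).

Lemma sym_maxmono_inv_zero : sym_maxmono (inv_op (@zero_op R n)).
Proof.
split; [split | split |].
- by [].
- by move=> a x y xs ys -> ->; rewrite scaler0 addr0.
- by move=> x y xs ys -> ->; rewrite subrr dotv0r.
- move=> B Bmono NB x xs Bx; apply: dotvv_eq0; apply/eqP.
  have := Bmono _ _ _ _ Bx (NB 0 (xs + x) erefl).
  rewrite opprD addrA subrr add0r subr0 dotvNl oppr_ge0 => le0.
  by rewrite eq_le le0 dotvv_ge0.
- by move=> x y xs ys -> ->; rewrite !dotv0l.
Qed.

Lemma ind0_qform : @ind0 R n = qform (inv_op (@zero_op R n)).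
Proof.
have [Nlin _ Nsym] := sym_maxmono_inv_zero.
apply/funext => x; rewrite /ind0; case: eqP => [->|x0].
  by rewrite (qformE (y := 0) Nlin Nsym) // dotv0l mulr0.
by rewrite qform_notdom // => -[xs].
Qed.

Definition parallel_sum_fam m (A : 'I_m -> oper R n) : oper R n :=
  inv_op (sum_op (fun i => inv_op (A i))).

Lemma parallel_sum_fam0 (A : 'I_0 -> oper R n) :
  parallel_sum_fam A = inv_op (@zero_op R n).
Proof. by rewrite /parallel_sum_fam /sum_op big_ord0. Qed.

Lemma parallel_sum_fam_recl m (A : 'I_m.+1 -> oper R n) :
  parallel_sum_fam A = parallel_sum (A ord0) (parallel_sum_fam (fun i => A (lift ord0 i))).
Proof. by rewrite /parallel_sum_fam /sum_op big_ord_recl. Qed.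

Lemma parallel_sum_fam_sym_maxmono m (A : 'I_m -> oper R n) :
  (forall i, sym_maxmono (A i)) -> sym_maxmono (parallel_sum_fam A).
Proof.
elim: m A => [|m IH] A Ammsl; first by rewrite parallel_sum_fam0; exact: sym_maxmono_inv_zero.
by rewrite parallel_sum_fam_recl; apply: parallel_sum_sym_maxmono; last apply: IH.
Qed.

Lemma infconv_fam_qform m (A : 'I_m -> oper R n) : (forall i, sym_maxmono (A i)) ->
  infconv_fam (fun i => qform (A i)) = qform (parallel_sum_fam A).
Proof.
elim: m A => [|m IH] A Ammsl; rewrite /infconv_fam.
  by rewrite big_ord0 parallel_sum_fam0 ind0_qform.
rewrite big_ord_recl [X in infconv _ X]IH // parallel_sum_fam_recl.
by apply: infconv_qform; last apply: parallel_sum_fam_sym_maxmono.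
Qed.

End ParallelSumFamily.

Theorem proposition4p29 (R : realType) (n m : nat) (hm : (0 < m)%N)
    (A : 'I_m -> oper R n)
    (hlin : forall i, linear_relation (A i))
    (hmax : forall i, maximally_monotone (A i))
    (hsym : forall i, symmetric_op (A i)) :
  let f := infconv_fam (fun i => qform (A i)) in
  gen_lin_quad f /\
  subdiff f = inv_op (sum_op (fun i => inv_op (A i))).
Proof.
move=> f.
have Ammsl i : sym_maxmono (A i) by split.
have [Clin Cmax _] := parallel_sum_fam_sym_maxmono Ammsl.
have fE : f = qform (parallel_sum_fam A) by exact: infconv_fam_qform.
split; last by rewrite fE subdiff_qform //; exact: parallel_sum_fam_sym_maxmono.
exists (parallel_sum_fam A), 0, 0, 0; do !split => //; first exact: Cmax.1.
by move=> x; rewrite fE subr0 dotv0l addr0 adde0.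
Qed.
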